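(* There exist absolute constants $0<c\le C<\infty$ such that for all $d\in\mathbb N_+$ and all $1\le n\le 3^d$, $$c\,\psi(n)\le a_n(I_d: W_2^{\infty}(\mathbb T^d)\to L_2(\mathbb T^d))\le C\,\psi(n),\qquad \psi(n)=\begin{cases}1,&1\le n\le d,\\ \Big(\frac{\log(1+\frac{d}{\log n})}{\log n}\Big)^{1/2},& d\le n\le 3^d,\end{cases}$$ and $a_n(I_d: W_2^{\infty}(\mathbb T^d)\to L_2(\mathbb T^d))=0$ for $n>3^d$.
   Context: $\log$ is base 2. $\mathbb T^d$ carries the normalized Lebesgue measure and $\hat f({\bf k})$ are Fourier coefficients w.r.t. $e^{i{\bf k}\cdot{\bf x}}$. $W_2^\infty(\mathbb T^d)$ is the space of all $f\in\bigcap_{{\bf m}\in\mathbb N_+^d}W_2^{\bf m}(\mathbb T^d)$ with $\sup_{{\bf m}\in\mathbb N_+^d}\|f|W_2^{\bf m}(\mathbb T^d)\|<\infty$, normed by this supremum, where $\|f|W_2^{\bf m}(\mathbb T^d)\|=\big(\sum_{{\bf k}\in\mathbb Z^d}(1+\sum_j|k_j|^{2m_j})|\hat f({\bf k})|^2\big)^{1/2}$. Equivalently, $W_2^\infty(\mathbb T^d)$ consists of trigonometric polynomials $f=\sum_{{\bf k}\in\{-1,0,1\}^d}\hat f({\bf k})e^{i{\bf k}\cdot{\bf x}}$ with norm $\big(\sum_{{\bf k}\in\{-1,0,1\}^d}(1+\sum_{j=1}^d|k_j|)|\hat f({\bf k})|^2\big)^{1/2}$; it has dimension $3^d$. $I_d$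 is the identity embedding; $a_n(T)=\inf\{\|T-A\|:\operatorname{rank}A<n\}$. *)

From Stdlib Require Import Reals List ZArith ClassicalEpsilon.
Import ListNotations.
Open Scope R_scope.

Definition Cx : Type := (R * R)%type.
Definition C0 : Cx := (0, 0).
Definition Cadd (z w : Cx) : Cx := (fst z + fst w, snd z + snd w).
Definition Csub (z w : Cx) : Cx := (fst z - fst w, snd z - snd w).
Definition Cmul (z w : Cx) : Cx :=
  (fst z * fst w - snd z * snd w, fst z * snd w + snd z * fst w).
Definition Cnorm2 (z : Cx) : R := fst z ^ 2 + snd z ^ 2.

Fixpoint Csum (n : nat) (f : nat -> Cx) : Cx :=
  match n with O => C0 | S m => Cadd (Csum m f) (f m) end.
Fixpoint Rsum (n : nat) (f : nat -> R) : R :=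
  match n with O => 0 | S m => Rsum m f + f m end.

Definition is_lower_bound (E : R -> Prop) (m : R) : Prop := forall x, E x -> m <= x.
Definition is_glb (E : R -> Prop) (m : R) : Prop :=
  is_lower_bound E m /\ (forall b, is_lower_bound E b -> b <= m).

Definition Rsup (E : R -> Prop) : R :=
  match excluded_middle_informative (exists m, is_lub E m) with
  | left H => proj1_sig (constructive_indefinite_description _ H)
  | right _ => 0
  end.
Definition Rinf (E : R -> Prop) : R :=
  match excluded_middle_informative (exists m, is_glb E m) with
  | left H => proj1_sig (constructive_indefinite_description _ H)
  | right _ => 0
  end.

Fixpoint cube (d : nat) : list (list Z) :=
  match d with
  | O => [[]]
  | S m => flat_map (fun k => map (fun e => e :: k) [(-1)%Z; 0%Z; 1%Z]) (cube m)
  end.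
Definition dimW (d : nat) : nat := (3 ^ d)%nat.
Definition freq (d j : nat) : list Z := nth j (cube d) [].
(* weight 1 + sum_j |k_j|  (for k in {-1,0,1}^d, |k_j|^{2m_j} = |k_j|) *)
Definition weight (k : list Z) : R := 1 + IZR (fold_right Z.add 0%Z (map Z.abs k)).

(* An element f of W_2^infty(T^d) is given by its Fourier coefficients
   f j = \hat f (freq d j), j < 3^d. *)
Definition W_norm (d : nat) (f : nat -> Cx) : R :=
  sqrt (Rsum (dimW d) (fun j => weight (freq d j) * Cnorm2 (f j))).
(* L_2(T^d)-norm (normalized measure, Parseval) of a trig. polynomial
   with spectrum in {-1,0,1}^d *)
Definition L2_norm (d : nat) (g : nat -> Cx) : R :=
  sqrt (Rsum (dimW d) (fun j => Cnorm2 (g j))).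

(* Linear operators on the (3^d-dimensional) space of trigonometric
   polynomials with spectrum in {-1,0,1}^d, as complex matrices in the
   Fourier basis. *)
Definition mat : Type := nat -> nat -> Cx.
Definition apply (d : nat) (A : mat) (f : nat -> Cx) : nat -> Cx :=
  fun i => Csum (dimW d) (fun j => Cmul (A i j) (f j)).

(* rank A < n  (n >= 1): A factors through C^(n-1) *)
Definition rank_lt (d : nat) (A : mat) (n : nat) : Prop :=
  (1 <= n)%nat /\
  exists B D : mat, forall i j, (i < dimW d)%nat -> (j < dimW d)%nat ->
    A i j = Csum (n - 1) (fun l => Cmul (B i l) (D l j)).

Definition opnorm_I_minus (d : nat) (A : mat) : R :=
  Rsup (fun y => exists f : nat -> Cx, W_norm d f <= 1 /\
          y = L2_norm d (fun i => Csub (f i) (apply d A f i))).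

Definition approx_number (d n : nat) : R :=
  Rinf (fun y => exists A : mat, rank_lt d A n /\ y = opnorm_I_minus d A).

Definition log2 (x : R) : R := ln x / ln 2.

Definition psi (d n : nat) : R :=
  if (n <=? d)%nat then 1
  else sqrt (log2 (1 + INR d / log2 (INR n)) / log2 (INR n)).

(** The embedding is diagonal in the Fourier basis, the frequency [k] being scaled by
    [weight k ^ (-1/2)] with [weight k = 1 + |k|_1].  Let [F(d,s)] be the number of points
    of [{-1,0,1}^d] in the l1-ball of radius [s].  If [F(d,s) < n], the projection onto
    these frequencies has rank [< n] and error [(s + 2) ^ (-1/2)]; if [n <= F(d,s)], every
    operator of rank [< n] annihilates some nonzero [f] spanned by [n] of them, whose error
    is at least [(s + 1) ^ (-1/2)].  So [a_n] is [s ^ (-1/2)] up to constants, for the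
    least [s] with [n <= F(d,s)].  The estimates
    [(1 + d/s) ^ s <= F(d,s) <= x ^ (-s) (1 + 2x) ^ d] (for [0 < x <= 1], taken [x = s/d])
    locate this [s] within constant factors of [ln n / ln (1 + d / log n) = psi d n ^ (-2)]. *)

From Pilot Require Import Defs.
From Stdlib Require Import Reals Lra Lia List ZArith Bool Classical ClassicalEpsilon.
From Coquelicot Require Import Complex.
Import ListNotations.
Open Scope R_scope.

(* The complex operations of [Defs] are Coquelicot's up to conversion. *)
Ltac Cx_ring :=
  try change Cmul with Cmult; try change Cadd with Cplus;
  try change C0 with (RtoC 0); try change Csub with Cminus;
  match goal with |- ?a = ?b => change (@eq C a b); ring end.

Definition Lsum (l : list nat) (f : nat -> C) : C :=
  fold_right (fun j acc => Cplus (f j) acc) (RtoC 0) l.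

Lemma Lsum_app l1 l2 f : Lsum (l1 ++ l2) f = Cplus (Lsum l1 f) (Lsum l2 f).
Proof. induction l1 as [|a l1 IH]; simpl; [ring | rewrite IH; ring]. Qed.

Lemma Csum_Lsum n f : Csum n f = Lsum (seq 0 n) f.
Proof.
  induction n as [|n IH]; [reflexivity|].
  rewrite seq_S, Lsum_app; simpl; rewrite <- IH; Cx_ring.
Qed.

Lemma Lsum_ext l f g : (forall j, In j l -> f j = g j) -> Lsum l f = Lsum l g.
Proof.
  induction l as [|a l IH]; intros Hfg; simpl; [reflexivity|].
  rewrite Hfg by now left.
  rewrite IH; [reflexivity | intros; apply Hfg; now right].
Qed.

Lemma Lsum_scal l f c : Lsum l (fun j => Cmult c (f j)) = Cmult c (Lsum l f).
Proof. induction l as [|a l IH]; simpl; [ring | rewrite IH; ring]. Qed.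

Lemma Lsum_sub l f g : Lsum l (fun j => Cminus (f j) (g j)) = Cminus (Lsum l f) (Lsum l g).
Proof. induction l as [|a l IH]; simpl; [ring | rewrite IH; ring]. Qed.

Lemma Lsum_filter (P : nat -> bool) l f :
  (forall j, In j l -> P j = false -> f j = RtoC 0) -> Lsum l f = Lsum (filter P l) f.
Proof.
  induction l as [|a l IH]; intros H0; simpl; [reflexivity|].
  rewrite IH by (intros; apply H0; simpl; auto).
  destruct (P a) eqn:Pa; simpl; [reflexivity|].
  rewrite H0 by (simpl; auto); ring.
Qed.

Lemma Csum_0 f : Csum 0 f = RtoC 0.
Proof. reflexivity. Qed.

Lemma Csum_S n f : Csum (S n) f = Cplus (Csum n f) (f n).
Proof. reflexivity. Qed.

Lemma Csum_ext n f g : (forall i, (i < n)%nat -> f i = g i) -> Csum n f = Csum n g.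
Proof.
  induction n as [|n IH]; intros Hfg; [reflexivity|].
  rewrite !Csum_S, Hfg, IH by (intros; try apply Hfg; lia); reflexivity.
Qed.

Lemma Csum_zero n f : (forall i, (i < n)%nat -> f i = RtoC 0) -> Csum n f = RtoC 0.
Proof.
  induction n as [|n IH]; intros Hf; [reflexivity|].
  rewrite Csum_S, Hf, IH by (intros; try apply Hf; lia); Cx_ring.
Qed.

Lemma Csum_add n f g : Csum n (fun i => Cplus (f i) (g i)) = Cplus (Csum n f) (Csum n g).
Proof. induction n as [|n IH]; [rewrite !Csum_0; Cx_ring | rewrite !Csum_S, IH; Cx_ring]. Qed.

Lemma Csum_mulr n f c : Cmult (Csum n f) c = Csum n (fun i => Cmult (f i) c).
Proof. induction n as [|n IH]; [rewrite !Csum_0; Cx_ring | rewrite !Csum_S, <- IH; Cx_ring]. Qed.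

Lemma Csum_mull n f c : Cmult c (Csum n f) = Csum n (fun i => Cmult c (f i)).
Proof. induction n as [|n IH]; [rewrite !Csum_0; Cx_ring | rewrite !Csum_S, <- IH; Cx_ring]. Qed.

Lemma Csum_swap n m (g : nat -> nat -> C) :
  Csum n (fun j => Csum m (g j)) = Csum m (fun l => Csum n (fun j => g j l)).
Proof.
  induction n as [|n IH].
  - symmetry; now apply Csum_zero.
  - rewrite Csum_S, IH, <- Csum_add. apply Csum_ext; reflexivity.
Qed.

Lemma Csum_single n f i :
  (i < n)%nat -> (forall j, (j < n)%nat -> j <> i -> f j = RtoC 0) -> Csum n f = f i.
Proof.
  induction n as [|n IH]; intros Hi Hf; [lia|]. rewrite Csum_S.
  destruct (Nat.eq_dec i n) as [-> | Hin].
  - rewrite Csum_zero by (intros; apply Hf; lia); Cx_ring.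
  - rewrite IH, (Hf n) by (intros; try apply Hf; lia); Cx_ring.
Qed.

Lemma Csum_shift n f : Csum (S n) f = Cplus (f 0%nat) (Csum n (fun l => f (S l))).
Proof.
  induction n as [|n IH]; [rewrite Csum_S, !Csum_0; Cx_ring|].
  rewrite Csum_S, IH, Csum_S; Cx_ring.
Qed.

(* The default [dflt <> i] makes the out-of-range terms vanish. *)
Lemma Csum_nth_indicator (G : list nat) dflt i (v : C) m :
  NoDup G -> dflt <> i -> (length G <= m)%nat ->
  Csum m (fun l => if (nth l G dflt =? i)%nat then v else RtoC 0)
  = if existsb (Nat.eqb i) G then v else RtoC 0.
Proof.
  revert m; induction G as [|a G IH]; intros m HG Hdflt Hm.
  - apply Csum_zero; intros [|l] _; simpl; destruct (Nat.eqb_spec dflt i); easy.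
  - destruct m as [|m]; simpl in Hm; [lia|].
    apply NoDup_cons_iff in HG as [HaG HG].
    rewrite Csum_shift; simpl. rewrite IH by (auto; lia).
    destruct (Nat.eqb_spec a i) as [-> | Hai]; simpl.
    + rewrite Nat.eqb_refl. destruct (existsb (Nat.eqb i) G) eqn:E; simpl; [|Cx_ring].
      apply existsb_exists in E as [x [Hx Hix]]. apply Nat.eqb_eq in Hix; subst; tauto.
    + rewrite (proj2 (Nat.eqb_neq i a)) by congruence; simpl; Cx_ring.
Qed.

Definition skip (p l : nat) : nat := if (l <? p)%nat then l else S l.

Lemma skip_surj p m l :
  (p < S m)%nat -> (l < S m)%nat -> l <> p -> exists l', (l' < m)%nat /\ skip p l' = l.
Proof.
  intros Hp Hl Hlp; unfold skip.
  destruct (Nat.ltb_spec l p).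
  - exists l; split; [lia|]. now rewrite (proj2 (Nat.ltb_lt l p)).
  - exists (pred l); split; [lia|]. rewrite (proj2 (Nat.ltb_ge (pred l) p)); lia.
Qed.

Definition extend_at (a : nat) (z : C) (f : nat -> C) : nat -> C :=
  fun j => if (j =? a)%nat then z else f j.

Lemma extend_at_supp a J z f :
  (forall j, ~ In j J -> f j = RtoC 0) -> forall j, ~ In j (a :: J) -> extend_at a z f j = RtoC 0.
Proof.
  intros Hf j Hj; unfold extend_at.
  destruct (Nat.eqb_spec j a); [subst; simpl in Hj; tauto | apply Hf; simpl in Hj; tauto].
Qed.

Lemma Lsum_cons_extend_at a J z f g : ~ In a J ->
  Lsum (a :: J) (fun j => Cmult (g j) (extend_at a z f j))
  = Cplus (Cmult (g a) z) (Lsum J (fun j => Cmult (g j) (f j))).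
Proof.
  intros HaJ; simpl; unfold extend_at at 1; rewrite Nat.eqb_refl. f_equal.
  apply Lsum_ext; intros j Hj; unfold extend_at.
  destruct (Nat.eqb_spec j a); [congruence | reflexivity].
Qed.

(* Gaussian elimination on the unknown indexed by the head of [J]: either its
   column vanishes, or a pivot equation expresses it through the others. *)
Lemma homogeneous_system_nontrivial (J : list nat) (m : nat) (D : nat -> nat -> C) :
  NoDup J -> (m < length J)%nat ->
  exists f : nat -> C,
    (forall j, ~ In j J -> f j = RtoC 0) /\ (exists j, In j J /\ f j <> RtoC 0) /\
    (forall l, (l < m)%nat -> Lsum J (fun j => Cmult (D l j) (f j)) = RtoC 0).
Proof.
  revert m D; induction J as [|a J IH]; intros m D HJ Hm; simpl in Hm; [lia|].
  apply NoDup_cons_iff in HJ as [HaJ HJ].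
  destruct (classic (exists l0, (l0 < m)%nat /\ D l0 a <> RtoC 0)) as [[l0 [Hl0 Hp]] | Hzero].
  - destruct m as [|m]; [lia|].
    set (p := D l0 a) in Hp.
    set (D' := fun l j => Cminus (D (skip l0 l) j) (Cmult (Cdiv (D (skip l0 l) a) p) (D l0 j))).
    destruct (IH m D' HJ ltac:(lia)) as [f [Hsupp [[j0 [Hj0 Hfj0]] Heq]]].
    set (T := fun l => Lsum J (fun j => Cmult (D l j) (f j))).
    assert (HT : forall l, (l < S m)%nat -> l <> l0 -> T l = Cmult (Cdiv (D l a) p) (T l0)).
    { intros l Hl Hll0. destruct (skip_surj l0 m l Hl0 Hl Hll0) as [l' [Hl' <-]].
      specialize (Heq l' Hl'). unfold D' in Heq.
      rewrite (Lsum_ext _ _ (fun j => Cminus (Cmult (D (skip l0 l') j) (f j))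
                 (Cmult (Cdiv (D (skip l0 l') a) p) (Cmult (D l0 j) (f j))))) in Heq by (intros; ring).
      rewrite Lsum_sub, Lsum_scal in Heq. fold (T (skip l0 l')) (T l0) in Heq.
      set (c := Cdiv (D (skip l0 l') a) p) in *.
      replace (T (skip l0 l')) with (Cplus (Cminus (T (skip l0 l')) (Cmult c (T l0))) (Cmult c (T l0)))
        by ring.
      rewrite Heq; ring. }
    exists (extend_at a (Cdiv (Copp (T l0)) p) f).
    split; [apply extend_at_supp, Hsupp | split].
    + exists j0; split; [now right|]. unfold extend_at.
      destruct (Nat.eqb_spec j0 a); [congruence | exact Hfj0].
    + intros l Hl. rewrite Lsum_cons_extend_at by exact HaJ. fold (T l).
      destruct (Nat.eq_dec l l0) as [-> | Hll0]; [fold p | rewrite (HT l Hl Hll0)]; field; exact Hp.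
  - exists (extend_at a (RtoC 1) (fun _ => RtoC 0)).
    split; [apply extend_at_supp; reflexivity | split].
    + exists a; split; [now left|]. unfold extend_at; rewrite Nat.eqb_refl.
      intro H1; injection H1; lra.
    + intros l Hl. rewrite Lsum_cons_extend_at by exact HaJ.
      assert (Hcol : D l a = RtoC 0) by (apply NNPP; intro; apply Hzero; eauto).
      rewrite Hcol, (Lsum_ext J _ (fun j => Cmult (RtoC 0) (D l j))) by (intros; ring).
      rewrite Lsum_scal; ring.
Qed.

Lemma Rsum_ext n f g : (forall i, (i < n)%nat -> f i = g i) -> Rsum n f = Rsum n g.
Proof.
  induction n as [|n IH]; intros Hfg; simpl; [reflexivity|].
  rewrite Hfg, IH by (intros; try apply Hfg; lia); reflexivity.
Qed.

Lemma Rsum_le n f g : (forall i, (i < n)%nat -> f i <= g i) -> Rsum n f <= Rsum n g.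
Proof.
  induction n as [|n IH]; intros Hfg; simpl; [lra|].
  pose proof (Hfg n ltac:(lia)); enough (Rsum n f <= Rsum n g) by lra.
  apply IH; intros; apply Hfg; lia.
Qed.

Lemma Rsum_nonneg n f : (forall i, (i < n)%nat -> 0 <= f i) -> 0 <= Rsum n f.
Proof.
  intros Hf. replace 0 with (Rsum n (fun _ => 0)); [now apply Rsum_le|].
  induction n as [|n IH]; simpl; [reflexivity | rewrite IH; [ring | intros; apply Hf; lia]].
Qed.

Lemma Rsum_ge_term n f i : (forall i, (i < n)%nat -> 0 <= f i) -> (i < n)%nat -> f i <= Rsum n f.
Proof.
  induction n as [|n IH]; intros Hf Hi; simpl; [lia|].
  destruct (Nat.eq_dec i n) as [-> | Hin].
  - enough (0 <= Rsum n f) by lra. apply Rsum_nonneg; intros; apply Hf; lia.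
  - pose proof (Hf n ltac:(lia)). enough (f i <= Rsum n f) by lra.
    apply IH; [intros; apply Hf | ]; lia.
Qed.

Lemma Rsum_scal n f c : Rsum n (fun i => c * f i) = c * Rsum n f.
Proof. induction n as [|n IH]; simpl; [ring | rewrite IH; ring]. Qed.

Lemma is_lub_exists (E : R -> Prop) :
  (exists x, E x) -> (exists b, forall x, E x -> x <= b) -> exists m, is_lub E m.
Proof.
  intros Hne [b Hb]. destruct (completeness E) as [m Hm]; [exists b; exact Hb | exact Hne |].
  now exists m.
Qed.

Lemma is_glb_exists (E : R -> Prop) :
  (exists x, E x) -> (exists b, forall x, E x -> b <= x) -> exists m, is_glb E m.
Proof.
  intros [x Hx] [b Hb].
  destruct (completeness (fun y => E (- y))) as [m [Hub Hleast]].
  - exists (- b); intros y Hy; specialize (Hb _ Hy); lra.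
  - exists (- x); now rewrite Ropp_involutive.
  - exists (- m); split.
    + intros y Hy. enough (- y <= m) by lra. apply Hub; now rewrite Ropp_involutive.
    + intros c Hc. enough (m <= - c) by lra.
      apply Hleast; intros y Hy; specialize (Hc _ Hy); lra.
Qed.

Lemma Rsup_is_lub E : (exists m, is_lub E m) -> is_lub E (Rsup E).
Proof.
  intros H; unfold Rsup; destruct excluded_middle_informative; [|contradiction].
  apply proj2_sig.
Qed.

Lemma Rinf_is_glb E : (exists m, is_glb E m) -> is_glb E (Rinf E).
Proof.
  intros H; unfold Rinf; destruct excluded_middle_informative; [|contradiction].
  apply proj2_sig.
Qed.

Lemma Rsup_le E b : (exists x, E x) -> (forall x, E x -> x <= b) -> Rsup E <= b.
Proof. intros Hne Hb. apply Rsup_is_lub; [apply is_lub_exists; eauto | exact Hb]. Qed.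

Lemma Rsup_ge E x : (exists b, forall x, E x -> x <= b) -> E x -> x <= Rsup E.
Proof. intros Hb Hx. apply Rsup_is_lub; [apply is_lub_exists; eauto | exact Hx]. Qed.

Lemma Rinf_ge E b : (exists x, E x) -> (forall x, E x -> b <= x) -> b <= Rinf E.
Proof. intros Hne Hb. apply Rinf_is_glb; [apply is_glb_exists; eauto | exact Hb]. Qed.

Lemma Rinf_le E x : (exists b, forall x, E x -> b <= x) -> E x -> Rinf E <= x.
Proof. intros Hb Hx. apply Rinf_is_glb; [apply is_glb_exists; eauto | exact Hx]. Qed.

(** * Approximation numbers of the diagonal embedding *)

Definition l1norm (k : list Z) : Z := fold_right Z.add 0%Z (map Z.abs k).

Lemma weight_l1norm k : weight k = 1 + IZR (l1norm k).
Proof. reflexivity. Qed.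

Lemma l1norm_ge0 k : (0 <= l1norm k)%Z.
Proof. unfold l1norm; induction k as [|e k IH]; simpl; [lia | pose proof (Z.abs_nonneg e); lia]. Qed.

Lemma weight_ge1 k : 1 <= weight k.
Proof. rewrite weight_l1norm. pose proof (IZR_le _ _ (l1norm_ge0 k)). lra. Qed.

Lemma Cnorm2_ge0 z : 0 <= Cnorm2 z.
Proof. destruct z as [a b]; unfold Cnorm2; simpl; nra. Qed.

Lemma Cnorm2_Cmod z : Cnorm2 z = Cmod z ^ 2.
Proof. destruct z as [a b]; unfold Cmod, Cnorm2; cbn [fst snd]. rewrite pow2_sqrt; [reflexivity | nra]. Qed.

Lemma Cnorm2_gt0 (z : C) : z <> RtoC 0 -> 0 < Cnorm2 z.
Proof.
  destruct z as [a b]; intros Hz; unfold Cnorm2; simpl.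
  destruct (Req_dec a 0), (Req_dec b 0); subst; [now contradict Hz | nra ..].
Qed.

Lemma Cnorm2_scal r z : Cnorm2 (Cmult (RtoC r) z) = r ^ 2 * Cnorm2 z.
Proof. unfold Cnorm2; simpl; ring. Qed.

Lemma Cnorm2_sub0 z : Cnorm2 (Csub z (RtoC 0)) = Cnorm2 z.
Proof. unfold Cnorm2; simpl; ring. Qed.

Lemma Cnorm2_subxx z : Cnorm2 (Csub z z) = 0.
Proof. unfold Cnorm2; simpl; ring. Qed.

Lemma Cmod_Csum n f : Cmod (Csum n f) <= Rsum n (fun i => Cmod (f i)).
Proof.
  induction n as [|n IH]; simpl.
  - change (Cmod (RtoC 0) <= 0); rewrite Cmod_0; lra.
  - change (Cadd (Csum n f) (f n)) with (Cplus (Csum n f) (f n)).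
    pose proof (Cmod_triangle (Csum n f) (f n)); lra.
Qed.

Lemma In_filter_seq (good : nat -> bool) n i :
  In i (filter good (seq 0 n)) <-> (i < n)%nat /\ good i = true.
Proof. rewrite filter_In, in_seq. split; intros [H1 H2]; split; auto; lia. Qed.

Section Operator.
Variable d : nat.

Local Notation N := (dimW d).
Local Notation energy f := (Rsum N (fun j => weight (freq d j) * Cnorm2 (f j))).

Lemma energy_term_ge0 (f : nat -> C) j : 0 <= weight (freq d j) * Cnorm2 (f j).
Proof. pose proof (weight_ge1 (freq d j)); pose proof (Cnorm2_ge0 (f j)); nra. Qed.

Lemma energy_le1 f : W_norm d f <= 1 -> energy f <= 1.
Proof.
  intros Hf. assert (H0 : 0 <= energy f) by (apply Rsum_nonneg; intros; apply energy_term_ge0).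
  pose proof (sqrt_sqrt _ H0); pose proof (sqrt_pos (energy f)); unfold W_norm in Hf; nra.
Qed.

Lemma Cmod_coef_le1 f j : W_norm d f <= 1 -> (j < N)%nat -> Cmod (f j) <= 1.
Proof.
  intros Hf Hj.
  assert (Hterm : weight (freq d j) * Cnorm2 (f j) <= 1).
  { eapply Rle_trans; [|exact (energy_le1 f Hf)].
    apply (Rsum_ge_term N (fun j => weight (freq d j) * Cnorm2 (f j))); auto using energy_term_ge0. }
  pose proof (weight_ge1 (freq d j)); pose proof (Cmod_ge_0 (f j)).
  rewrite Cnorm2_Cmod in Hterm. nra.
Qed.

Definition error_set (A : mat) (y : R) : Prop :=
  exists f : nat -> Cx, W_norm d f <= 1 /\ y = L2_norm d (fun i => Csub (f i) (Defs.apply d A f i)).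

Definition approx_set (n : nat) (y : R) : Prop :=
  exists A : mat, rank_lt d A n /\ y = opnorm_I_minus d A.

Lemma error_set_bounded A : exists b, forall y, error_set A y -> y <= b.
Proof.
  exists (sqrt (Rsum N (fun i => (1 + Rsum N (fun j => Cmod (A i j))) ^ 2))).
  intros y [f [Hf ->]]. apply sqrt_le_1_alt, Rsum_le. intros i Hi.
  rewrite Cnorm2_Cmod. apply pow_incr. split; [apply Cmod_ge_0|].
  change (Cmod (Cminus (f i) (Defs.apply d A f i)) <= 1 + Rsum N (fun j => Cmod (A i j))).
  assert (HAf : Cmod (Defs.apply d A f i) <= Rsum N (fun j => Cmod (A i j))).
  { eapply Rle_trans; [apply Cmod_Csum|]. apply Rsum_le. intros j Hj.
    change (Cmod (Cmult (A i j) (f j)) <= Cmod (A i j)). rewrite Cmod_mult.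
    pose proof (Cmod_coef_le1 f j Hf Hj); pose proof (Cmod_ge_0 (A i j)); pose proof (Cmod_ge_0 (f j)). nra. }
  pose proof (Cmod_triangle (f i) (Copp (Defs.apply d A f i))). rewrite Cmod_opp in *.
  pose proof (Cmod_coef_le1 f i Hf Hi). unfold Cminus. lra.
Qed.

Lemma error_set_inhabited A : exists y, error_set A y.
Proof.
  eexists; exists (fun _ => C0); split; [|reflexivity].
  unfold W_norm. rewrite (Rsum_ext _ _ (fun j => 0 * weight (freq d j))), Rsum_scal.
  - rewrite Rmult_0_l, sqrt_0; lra.
  - intros; unfold Cnorm2, C0; simpl; ring.
Qed.

Lemma opnorm_I_minus_ge0 A : 0 <= opnorm_I_minus d A.
Proof.
  destruct (error_set_inhabited A) as [y Hy].
  assert (0 <= y) by (destruct Hy as [f [_ ->]]; apply sqrt_pos).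
  pose proof (Rsup_ge _ _ (error_set_bounded A) Hy). unfold opnorm_I_minus. fold (error_set A). lra.
Qed.

Lemma approx_set_ge0 n : exists b, forall y, approx_set n y -> b <= y.
Proof. exists 0; intros y [A [_ ->]]; apply opnorm_I_minus_ge0. Qed.

Lemma approx_set_inhabited n : (1 <= n)%nat -> exists y, approx_set n y.
Proof.
  intros Hn. exists (opnorm_I_minus d (fun _ _ => C0)), (fun _ _ => C0).
  split; [|reflexivity]. split; [exact Hn|].
  exists (fun _ _ => C0), (fun _ _ => C0). intros; symmetry; apply Csum_zero; intros; Cx_ring.
Qed.


(* The projection onto the coordinates [G = {j < N | good j}] as a sum of [r >= |G|]
   rank-one terms; the terms with [l >= |G|] vanish because [nth] then returns the
   out-of-range default [N]. *)
Definition coord_factor (good : nat -> bool) (i l : nat) : C :=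
  if (nth l (filter good (seq 0 N)) N =? i)%nat then RtoC 1 else RtoC 0.

Definition coord_proj (good : nat -> bool) (r : nat) : mat :=
  fun i j => Csum r (fun l => Cmult (coord_factor good i l) (coord_factor good j l)).

Lemma coord_proj_rank_lt good n : (1 <= n)%nat -> rank_lt d (coord_proj good (n - 1)) n.
Proof. intros Hn; split; [exact Hn|]. now exists (coord_factor good), (fun l j => coord_factor good j l). Qed.

Lemma coord_proj_entry good r i j :
  (length (filter good (seq 0 N)) <= r)%nat -> (i < N)%nat -> (j < N)%nat ->
  coord_proj good r i j = if ((i =? j) && good i)%bool then RtoC 1 else RtoC 0.
Proof.
  intros Hr Hi Hj. unfold coord_proj, coord_factor.
  set (G := filter good (seq 0 N)) in *.
  destruct (Nat.eqb_spec i j) as [<- | Hij]; simpl.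
  - rewrite (Csum_ext _ _ (fun l => if (nth l G N =? i)%nat then RtoC 1 else RtoC 0))
      by (intros; destruct (_ =? i)%nat; Cx_ring).
    rewrite Csum_nth_indicator by first [lia | unfold G; apply NoDup_filter, seq_NoDup].
    replace (existsb (Nat.eqb i) G) with (good i); [reflexivity|].
    destruct (good i) eqn:Hg; symmetry.
    + apply existsb_exists; exists i; split; [apply In_filter_seq; auto | apply Nat.eqb_refl].
    + apply not_true_is_false; intros [x [Hx Hix]]%existsb_exists.
      apply Nat.eqb_eq in Hix as <-; apply In_filter_seq in Hx; destruct Hx; congruence.
  - apply Csum_zero; intros l _.
    destruct (Nat.eqb_spec (nth l G N) i), (Nat.eqb_spec (nth l G N) j); try Cx_ring; lia.
Qed.

Lemma apply_coord_proj good r f i :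
  (length (filter good (seq 0 N)) <= r)%nat -> (i < N)%nat ->
  Defs.apply d (coord_proj good r) f i = if good i then f i else RtoC 0.
Proof.
  intros Hr Hi. unfold Defs.apply. rewrite (Csum_single _ _ i Hi).
  - rewrite coord_proj_entry, Nat.eqb_refl by auto; simpl. destruct (good i); Cx_ring.
  - intros j Hj Hji. rewrite coord_proj_entry by auto.
    rewrite (proj2 (Nat.eqb_neq i j)) by congruence; simpl; Cx_ring.
Qed.

Lemma approx_number_le_coord_proj n (good : nat -> bool) c :
  (1 <= n)%nat -> (length (filter good (seq 0 N)) <= n - 1)%nat -> 0 <= c ->
  (forall j, (j < N)%nat -> good j = false -> 1 <= c * weight (freq d j)) ->
  approx_number d n <= sqrt c.
Proof.
  intros Hn Hlen Hc Hbad.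
  eapply Rle_trans; [apply (Rinf_le (approx_set n)); [apply approx_set_ge0|]|].
  { exists (coord_proj good (n - 1)); split; [apply coord_proj_rank_lt; exact Hn | reflexivity]. }
  apply Rsup_le; [apply error_set_inhabited|]. intros y [f [Hf ->]].
  apply sqrt_le_1_alt. pose proof (energy_le1 f Hf).
  apply Rle_trans with (c * energy f); [|nra].
  rewrite <- Rsum_scal. apply Rsum_le. intros i Hi.
  rewrite apply_coord_proj by auto.
  pose proof (energy_term_ge0 f i).
  destruct (good i) eqn:Hg.
  - rewrite Cnorm2_subxx. apply Rmult_le_pos; lra.
  - rewrite Cnorm2_sub0. specialize (Hbad i Hi Hg). pose proof (Cnorm2_ge0 (f i)). nra.
Qed.

Lemma energy_normalize (f : nat -> C) j0 :
  (j0 < N)%nat -> f j0 <> RtoC 0 -> exists r, energy (fun j => Cmult (RtoC r) (f j)) = 1.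
Proof.
  intros Hj0 Hf0.
  assert (HQ : 0 < energy f).
  { eapply Rlt_le_trans; [|apply (Rsum_ge_term N _ j0); auto using energy_term_ge0].
    pose proof (weight_ge1 (freq d j0)); pose proof (Cnorm2_gt0 _ Hf0); nra. }
  exists (/ sqrt (energy f)).
  rewrite (Rsum_ext _ _ (fun j => (/ sqrt (energy f)) ^ 2 * (weight (freq d j) * Cnorm2 (f j))))
    by (intros; rewrite Cnorm2_scal; ring).
  rewrite Rsum_scal, pow_inv, pow2_sqrt by lra. field; lra.
Qed.

(* A factorisation through [C^(n-1)] imposes only [n - 1] linear conditions, so it
   cannot be injective on the span of [n] coordinates. *)
Lemma rank_lt_kernel_unit_vector A n (good : nat -> bool) :
  rank_lt d A n -> (n <= length (filter good (seq 0 N)))%nat ->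
  exists g : nat -> C, energy g = 1 /\
    (forall j, (j < N)%nat -> good j = false -> g j = RtoC 0) /\
    (forall i, (i < N)%nat -> Defs.apply d A g i = RtoC 0).
Proof.
  intros [Hn [B [D HBD]]] Hlen.
  set (S := filter good (seq 0 N)) in *.
  destruct (homogeneous_system_nontrivial S (n - 1) D) as [f [Hsupp [[j0 [Hj0 Hf0]] Hker]]];
    [apply NoDup_filter, seq_NoDup | lia |].
  apply In_filter_seq in Hj0 as Hj0'.
  destruct (energy_normalize f j0 (proj1 Hj0') Hf0) as [r Hr].
  exists (fun j => Cmult (RtoC r) (f j)); split; [exact Hr|]. split.
  - intros j Hj Hg. rewrite Hsupp; [Cx_ring|]. intros HS%In_filter_seq; destruct HS; congruence.
  - intros i Hi. unfold Defs.apply.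
    rewrite (Csum_ext _ _ (fun j => Csum (n - 1)
               (fun l => Cmult (B i l) (Cmult (RtoC r) (Cmult (D l j) (f j)))))).
    2:{ intros j Hj. rewrite HBD by auto. change Cmul with Cmult. rewrite Csum_mulr.
        apply Csum_ext; intros; Cx_ring. }
    rewrite Csum_swap. apply Csum_zero. intros l Hl.
    rewrite <- !Csum_mull, Csum_Lsum, (Lsum_filter good).
    + fold S. rewrite Hker by lia. Cx_ring.
    + intros j _ Hg. rewrite Hsupp; [Cx_ring|]. intros HS%In_filter_seq; destruct HS; congruence.
Qed.

Lemma approx_number_ge_span n (good : nat -> bool) t :
  (1 <= n)%nat -> (n <= length (filter good (seq 0 N)))%nat -> 0 < t ->
  (forall j, (j < N)%nat -> good j = true -> weight (freq d j) <= t) ->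
  sqrt (/ t) <= approx_number d n.
Proof.
  intros Hn Hlen Ht Hgood.
  apply (Rinf_ge (approx_set n)); [apply approx_set_inhabited; exact Hn|].
  intros y [A [HA ->]].
  destruct (rank_lt_kernel_unit_vector A n good HA Hlen) as [g [Hg1 [Hgood0 HAg]]].
  eapply Rle_trans; [|apply Rsup_ge; [apply error_set_bounded | exists g; split; [|reflexivity]]].
  2:{ unfold W_norm. rewrite Hg1, sqrt_1; lra. }
  apply sqrt_le_1_alt. rewrite <- (Rmult_1_r (/ t)), <- Hg1, <- Rsum_scal.
  apply Rsum_le. intros i Hi. rewrite HAg, Cnorm2_sub0 by exact Hi.
  pose proof (Cnorm2_ge0 (g i)).
  destruct (good i) eqn:Hg.
  - specialize (Hgood i Hi Hg).
    assert (/ t * weight (freq d i) <= 1)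
      by (apply (Rmult_le_reg_l t); [lra | rewrite <- Rmult_assoc, Rinv_r; lra]).
    nra.
  - rewrite Hgood0 by auto. unfold Cnorm2; simpl; lra.
Qed.

End Operator.

(** * Counting frequencies in l1-balls *)

Definition in_l1ball (s : nat) (k : list Z) : bool := (l1norm k <=? Z.of_nat s)%Z.

Definition ball_count (d s : nat) : nat := length (filter (in_l1ball s) (cube d)).

Lemma in_l1ball_cons0 s k : in_l1ball s (0%Z :: k) = in_l1ball s k.
Proof. reflexivity. Qed.

Lemma in_l1ball_cons_unit s e k :
  Z.abs e = 1%Z -> in_l1ball s (e :: k) = match s with O => false | S s' => in_l1ball s' k end.
Proof.
  intros He. pose proof (l1norm_ge0 k). unfold in_l1ball; cbn [l1norm map fold_right].
  change (fold_right Z.add 0%Z (map Z.abs k)) with (l1norm k). rewrite He.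
  destruct s as [|s]; [apply Z.leb_gt; lia|].
  destruct (Z.leb_spec (l1norm k) (Z.of_nat s)); [apply Z.leb_le | apply Z.leb_gt]; lia.
Qed.

Definition cube_extend (k : list Z) : list (list Z) := map (fun e => e :: k) [(-1)%Z; 0%Z; 1%Z].

Lemma ball_count_S d s :
  ball_count (S d) s = (ball_count d s + match s with O => 0 | S s' => 2 * ball_count d s' end)%nat.
Proof.
  unfold ball_count. change (cube (S d)) with (flat_map cube_extend (cube d)).
  induction (cube d) as [|k l IH]; [destruct s; reflexivity|].
  change (flat_map cube_extend (k :: l)) with (cube_extend k ++ flat_map cube_extend l).
  rewrite filter_app, length_app, IH. unfold cube_extend; cbn [map filter].
  rewrite in_l1ball_cons0, !in_l1ball_cons_unit by reflexivity.
  destruct s as [|s]; [destruct (in_l1ball 0 k); simpl; lia|].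
  destruct (in_l1ball (S s) k), (in_l1ball s k); simpl; lia.
Qed.

Lemma ball_count_dim0 s : ball_count 0 s = 1%nat.
Proof. unfold ball_count, in_l1ball; simpl. now destruct (Z.leb_spec (l1norm []) (Z.of_nat s)); [|cbn in *; lia]. Qed.

Lemma ball_count_radius0 d : ball_count d 0 = 1%nat.
Proof. induction d as [|d IH]; [apply ball_count_dim0 | rewrite ball_count_S, IH; reflexivity]. Qed.

Lemma ball_count_radius1 d : ball_count d 1 = (2 * d + 1)%nat.
Proof.
  induction d as [|d IH]; [apply ball_count_dim0|].
  rewrite ball_count_S, IH, ball_count_radius0; lia.
Qed.

Lemma ball_count_full d s : (d <= s)%nat -> ball_count d s = (3 ^ d)%nat.
Proof.
  revert s; induction d as [|d IH]; intros [|s] Hs; try lia; [apply ball_count_dim0 ..|].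
  rewrite ball_count_S, !IH by lia; simpl; lia.
Qed.

Lemma ball_count_le_radius d s s' : (s <= s')%nat -> (ball_count d s <= ball_count d s')%nat.
Proof.
  revert s s'; induction d as [|d IH]; intros s s' Hs; [rewrite !ball_count_dim0; lia|].
  rewrite !ball_count_S. pose proof (IH _ _ Hs).
  destruct s as [|s], s' as [|s']; try lia. pose proof (IH s s' ltac:(lia)); lia.
Qed.

Lemma ball_count_ge1 d s : (1 <= ball_count d s)%nat.
Proof. rewrite <- (ball_count_radius0 d). apply ball_count_le_radius; lia. Qed.

Lemma ball_count_le_dim d d' s : (d <= d')%nat -> (ball_count d s <= ball_count d' s)%nat.
Proof.
  induction 1 as [|d' _ IH]; [lia|].
  rewrite ball_count_S; lia.
Qed.

Lemma ball_count_mul a b s t :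
  (ball_count a s * ball_count b t <= ball_count (a + b) (s + t))%nat.
Proof.
  revert s; induction a as [|a IH]; intros s.
  - rewrite ball_count_dim0. pose proof (ball_count_le_radius b t (s + t) ltac:(lia)); simpl; lia.
  - destruct s as [|s].
    + rewrite ball_count_radius0, Nat.add_0_l. pose proof (ball_count_le_dim b (S a + b) t ltac:(lia)); lia.
    + change (S a + b)%nat with (S (a + b)). change (S s + t)%nat with (S (s + t)).
      rewrite !ball_count_S. pose proof (IH (S s)). pose proof (IH s). simpl in *; nia.
Qed.

Lemma ball_count_block s q : ((2 * q + 1) ^ s <= ball_count (s * q) s)%nat.
Proof.
  induction s as [|s IH]; [rewrite ball_count_dim0; simpl; lia|].
  pose proof (ball_count_mul q (s * q) 1 s). rewrite ball_count_radius1 in *.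
  rewrite Nat.pow_succ_r'; simpl in *; nia.
Qed.

Lemma ball_count_ge_pow d s : (1 <= s <= d)%nat -> (1 + INR d / INR s) ^ s <= INR (ball_count d s).
Proof.
  intros Hs.
  assert (Hdiv : (s * (d / s) <= d < s * (d / s) + s)%nat)
    by (pose proof (Nat.div_mod d s ltac:(lia)); pose proof (Nat.mod_upper_bound d s ltac:(lia)); lia).
  pose proof (Nat.div_str_pos d s ltac:(lia)).
  set (q := (d / s)%nat) in *.
  assert (Hcount : ((2 * q + 1) ^ s <= ball_count d s)%nat).
  { pose proof (ball_count_block s q); pose proof (ball_count_le_dim (s * q) d s ltac:(lia)); lia. }
  apply le_INR in Hcount; rewrite pow_INR in Hcount.
  eapply Rle_trans; [|exact Hcount]. apply pow_incr.
  assert (Hs0 : 0 < INR s) by (apply lt_0_INR; lia).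
  assert (Hdq : INR d + INR s <= INR s * INR (2 * q + 1))
    by (rewrite <- plus_INR, <- mult_INR; apply le_INR; nia).
  pose proof (pos_INR d). split.
  - pose proof (Rdiv_lt_0_compat (INR d) (INR s) (lt_0_INR d ltac:(lia)) Hs0); lra.
  - apply (Rmult_le_reg_l (INR s)); [exact Hs0|]. field_simplify; lra.
Qed.

Lemma pow_le1 x k : 0 <= x <= 1 -> x ^ k <= 1.
Proof.
  intros Hx; induction k as [|k IH]; simpl; [lra|].
  pose proof (pow_le x k (proj1 Hx)); nra.
Qed.

(* Generating-function bound: each coordinate contributes a factor [1 + 2x]. *)
Lemma ball_count_pow_le d s x : 0 <= x <= 1 -> INR (ball_count d s) * x ^ s <= (1 + 2 * x) ^ d.
Proof.
  intros Hx. revert s; induction d as [|d IH]; intros s.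
  - rewrite ball_count_dim0, Rmult_1_l; apply pow_le1, Hx.
  - rewrite ball_count_S. destruct s as [|s].
    + rewrite ball_count_radius0; simpl. pose proof (pow_R1_Rle (1 + 2 * x) d ltac:(lra)); nra.
    + rewrite plus_INR, mult_INR. pose proof (IH (S s)); pose proof (IH s).
      assert (2 * x * (INR (ball_count d s) * x ^ s) <= 2 * x * (1 + 2 * x) ^ d)
        by (apply Rmult_le_compat_l; lra).
      simpl pow in *. simpl INR. nra.
Qed.

Lemma length_cube d : length (cube d) = (3 ^ d)%nat.
Proof.
  induction d as [|d IH]; [reflexivity|]; cbn [cube].
  rewrite (flat_map_constant_length (c := 3%nat)), IH by reflexivity; simpl; lia.
Qed.

Lemma map_nth_seq {A} (L : list A) (x : A) : map (fun j => nth j L x) (seq 0 (length L)) = L.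
Proof.
  apply (nth_ext _ _ x x); rewrite ?length_map, ?length_seq; [reflexivity|].
  intros j Hj.
  rewrite (nth_indep _ x (nth 0 L x)) by (rewrite length_map, length_seq; lia).
  rewrite (map_nth (fun j => nth j L x) _ 0%nat), seq_nth by lia; reflexivity.
Qed.

Lemma count_freq_in_l1ball d s :
  length (filter (fun j => in_l1ball s (freq d j)) (seq 0 (dimW d))) = ball_count d s.
Proof.
  unfold ball_count, dimW, freq. rewrite <- length_cube.
  transitivity (length (filter (in_l1ball s) (map (fun j => nth j (cube d) []) (seq 0 (length (cube d)))))).
  - now rewrite filter_map_swap, length_map.
  - now rewrite map_nth_seq.
Qed.

Lemma weight_in_l1ball s k : in_l1ball s k = true -> weight k <= INR s + 1.
Proof.
  intros Hk%Z.leb_le. rewrite weight_l1norm, INR_IZR_INZ.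
  apply IZR_le in Hk; lra.
Qed.

Lemma weight_notin_l1ball s k : in_l1ball s k = false -> INR s + 2 <= weight k.
Proof.
  intros Hk%Z.leb_gt. rewrite weight_l1norm, INR_IZR_INZ.
  assert (Z.of_nat s + 1 <= l1norm k)%Z as Hle%IZR_le by lia. rewrite plus_IZR in Hle; lra.
Qed.

Lemma approx_number_le_radius d n s :
  (1 <= n)%nat -> (ball_count d s < n)%nat -> approx_number d n <= sqrt (/ (INR s + 2)).
Proof.
  intros Hn Hs. pose proof (pos_INR s).
  apply (approx_number_le_coord_proj d n (fun j => in_l1ball s (freq d j))); auto.
  - rewrite count_freq_in_l1ball; lia.
  - left; apply Rinv_0_lt_compat; lra.
  - intros j _ Hj. pose proof (weight_notin_l1ball s (freq d j) Hj).
    apply (Rmult_le_reg_l (INR s + 2)); [lra|]. rewrite <- Rmult_assoc, Rinv_r; lra.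
Qed.

Lemma approx_number_ge_radius d n s :
  (1 <= n)%nat -> (n <= ball_count d s)%nat -> sqrt (/ (INR s + 1)) <= approx_number d n.
Proof.
  intros Hn Hs. pose proof (pos_INR s).
  apply (approx_number_ge_span d n (fun j => in_l1ball s (freq d j))); auto.
  - rewrite count_freq_in_l1ball; lia.
  - lra.
  - intros j _ Hj; exact (weight_in_l1ball s (freq d j) Hj).
Qed.

Lemma approx_number_le1 d n : (1 <= n)%nat -> approx_number d n <= 1.
Proof.
  intros Hn. rewrite <- sqrt_1. apply (approx_number_le_coord_proj d n (fun _ => false)); auto.
  - rewrite filter_false; simpl; lia.
  - lra.
  - intros j _ _; rewrite Rmult_1_l; apply weight_ge1.
Qed.

Lemma approx_number_beyond_dim d n : (dimW d < n)%nat -> approx_number d n = 0.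
Proof.
  intros Hn. apply Rle_antisym.
  - rewrite <- sqrt_0. apply (approx_number_le_coord_proj d n (fun _ => true)).
    + lia.
    + rewrite filter_true, length_seq; lia.
    + lra.
    + intros j _ Hj; discriminate Hj.
  - apply (Rinf_ge (approx_set d n)); [apply approx_set_inhabited; lia|].
    intros y [A [_ ->]]; apply opnorm_I_minus_ge0.
Qed.

(** * Asymptotics *)

Lemma ln_le x y : 0 < x -> x <= y -> ln x <= ln y.
Proof. intros Hx [Hxy | ->]; [left; now apply ln_increasing | lra]. Qed.

Lemma le_of_ln_le x y : 0 < x -> 0 < y -> ln x <= ln y -> x <= y.
Proof. intros Hx Hy Hln. destruct (Rle_or_lt x y) as [|Hyx]; [assumption|]. pose proof (ln_increasing y x Hy Hyx); lra. Qed.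

Lemma ln_le_sub1 y : 0 < y -> ln y <= y - 1.
Proof. intros Hy. pose proof (exp_ineq1_le (ln y)). rewrite exp_ln in *; lra. Qed.

Lemma ln_ge_1_sub_inv y : 0 < y -> 1 - / y <= ln y.
Proof. intros Hy. pose proof (ln_le_sub1 (/ y) (Rinv_0_lt_compat _ Hy)). rewrite ln_Rinv in *; lra. Qed.

Lemma ln2_bounds : / 2 < ln 2 <= 1.
Proof. split; [apply ln_lt_2 | pose proof (ln_le_sub1 2); lra]. Qed.

Lemma ln_4 : ln 4 = 2 * ln 2.
Proof. replace 4 with (2 * 2) by lra. rewrite ln_mult; lra. Qed.

Lemma nat_ceil_exists v : 0 < v -> exists s : nat, v <= INR s <= v + 1.
Proof.
  intros Hv. destruct (archimed v) as [H1 H2]. assert (0 < up v)%Z by (apply lt_IZR; lra).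
  exists (Z.to_nat (up v)). rewrite INR_IZR_INZ, Z2Nat.id by lia. lra.
Qed.

Lemma nat_floor_exists v : 0 < v -> exists s : nat, INR s <= v < INR s + 1.
Proof.
  intros Hv. destruct (archimed v) as [H1 H2]. assert (0 < up v)%Z by (apply lt_IZR; lra).
  exists (Z.to_nat (up v - 1)). rewrite INR_IZR_INZ, Z2Nat.id, minus_IZR by lia. lra.
Qed.

Lemma ln_ball_count_ge d s :
  (1 <= s <= d)%nat -> INR s * ln (1 + INR d / INR s) <= ln (INR (ball_count d s)).
Proof.
  intros Hs. assert (0 < INR d / INR s) by (apply Rdiv_lt_0_compat; apply lt_0_INR; lia).
  rewrite <- ln_pow by lra. apply ln_le; [apply pow_lt; lra | now apply ball_count_ge_pow].
Qed.

Lemma ln_ball_count_le d s x :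
  0 < x <= 1 -> ln (INR (ball_count d s)) <= 2 * INR d * x - INR s * ln x.
Proof.
  intros Hx. pose proof (ball_count_pow_le d s x ltac:(lra)) as Hgen.
  assert (HF : 0 < INR (ball_count d s)) by (apply lt_0_INR; pose proof (ball_count_ge1 d s); lia).
  apply ln_le in Hgen; [|apply Rmult_lt_0_compat; [exact HF | apply pow_lt; lra]].
  rewrite ln_mult, !ln_pow in Hgen by (try apply pow_lt; lra).
  pose proof (ln_le_sub1 (1 + 2 * x) ltac:(lra)). pose proof (pos_INR d). nra.
Qed.

Lemma scale_sqrt c p : 0 <= c -> c * sqrt p = sqrt (c ^ 2 * p).
Proof.
  intros Hc. destruct (Rle_or_lt 0 p) as [Hp | Hp].
  - rewrite sqrt_mult_alt, sqrt_pow2 by (try apply pow_le; lra); reflexivity.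
  - assert (c ^ 2 * p <= 0) by (pose proof (pow2_ge_0 c); nra).
    rewrite (sqrt_neg_0 p), (sqrt_neg_0 (c ^ 2 * p)) by lra; ring.
Qed.

Section Asymptotics.
Variables d n : nat.
Hypothesis Hd : (1 <= d)%nat.
Hypothesis Hdn : (d < n)%nat.
Hypothesis Hn3 : (n <= 3 ^ d)%nat.

(* [v] is [psi d n ^ (-2)]. *)
Local Notation lam := (ln (INR n)).
Local Notation u := (INR d / log2 (INR n)).
Local Notation w := (ln (1 + u)).
Local Notation v := (lam / w).

Lemma INR_d_ge1 : 1 <= INR d.
Proof. apply (le_INR 1); lia. Qed.

Lemma lam_bounds : ln 2 <= lam <= 2 * ln 2 * INR d.
Proof.
  assert (Hn : INR d + 1 <= INR n) by (rewrite <- S_INR; apply le_INR; lia).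
  pose proof INR_d_ge1. split; [apply ln_le; lra|].
  assert (Hn4 : INR n <= 4 ^ d).
  { replace 4 with (INR 4) by (simpl; lra). rewrite <- pow_INR. apply le_INR.
    eapply Nat.le_trans; [exact Hn3 | apply Nat.pow_le_mono_l; lia]. }
  eapply Rle_trans; [apply ln_le; [lra | exact Hn4]|]. rewrite ln_pow, ln_4 by lra. lra.
Qed.

Lemma u_mul_lam : u * lam = INR d * ln 2.
Proof. destruct ln2_bounds, lam_bounds. unfold log2. field. split; lra. Qed.

Lemma u_bounds : 1 / 2 <= u <= INR d.
Proof. pose proof u_mul_lam; pose proof INR_d_ge1; destruct ln2_bounds, lam_bounds. split; nra. Qed.

Lemma w_bounds : 1 / 3 <= w <= lam.
Proof.
  pose proof u_bounds. split.
  - pose proof (ln_ge_1_sub_inv (1 + u) ltac:(lra)).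
    enough (/ (1 + u) <= 2 / 3) by lra.
    apply (Rmult_le_reg_l (1 + u)); [lra | rewrite Rinv_r; lra].
  - apply ln_le; [lra|]. apply (Rle_trans _ (INR (S d))); [rewrite S_INR; lra | apply le_INR; lia].
Qed.

Lemma v_mul_w : v * w = lam.
Proof. pose proof w_bounds. field; lra. Qed.

Lemma d_ln2_eq : INR d * ln 2 = v * (u * w).
Proof.
  pose proof u_mul_lam as Hul; pose proof v_mul_w as Hvw.
  set (V := v) in *. set (W := w) in *. set (U := u) in *. set (L := lam) in *.
  rewrite <- Hul, <- Hvw; ring.
Qed.

Lemma v_ge1 : 1 <= v.
Proof. pose proof v_mul_w; pose proof w_bounds. nra. Qed.

Lemma exists_radius_count_ge : exists s, (n <= ball_count d s)%nat /\ INR s + 1 <= 16 * v.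
Proof.
  pose proof d_ln2_eq as Hd2; pose proof v_mul_w as Hvw.
  pose proof u_bounds; pose proof w_bounds; pose proof v_ge1; destruct ln2_bounds.
  set (V := v) in *. set (W := w) in *. set (U := u) in *.
  (* Small [u] allows [s = d]; otherwise [s = ceil v] satisfies [d / s >= u]. *)
  destruct (Rle_or_lt (INR d + 1) (16 * V)) as [Hsmall | Hlarge].
  { exists d; split; [rewrite ball_count_full; lia | exact Hsmall]. }
  assert (HU : 3 < U).
  { destruct (Rle_or_lt U 3) as [HU|HU]; [exfalso|exact HU].
    assert (W <= 2 * ln 2) by (rewrite <- ln_4; apply ln_le; lra).
    assert (U * W <= 6 * ln 2) by nra.
    assert (INR d * ln 2 <= 6 * V * ln 2) by nra. nra. }
  destruct (nat_ceil_exists V ltac:(lra)) as [s [Hs1 Hs2]].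
  assert (Hsd : (1 <= s <= d)%nat).
  { split; [apply INR_le; simpl; lra|]. apply Nat.lt_succ_r, INR_lt. rewrite S_INR; lra. }
  exists s; split; [|lra].
  assert (Hratio : W <= ln (1 + INR d / INR s)).
  { assert (W2 : 2 * ln 2 <= W) by (rewrite <- ln_4; apply ln_le; lra).
    assert (Hs0 : 0 < INR s) by lra.
    apply ln_le; [lra|]. enough (U * INR s <= INR d).
    { enough (U <= INR d / INR s) by lra. apply (Rmult_le_reg_r (INR s)); [lra|]. field_simplify; lra. }
    assert (HUV : 0 <= U * V) by nra.
    assert (2 * ln 2 * (U * V) <= W * (U * V)) by (apply Rmult_le_compat_r; lra).
    assert (2 * (U * V) <= INR d) by nra. nra. }
  apply INR_le, le_of_ln_le; [apply lt_0_INR; lia | apply lt_0_INR; pose proof (ball_count_ge1 d s); lia|].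
  pose proof (ln_ball_count_ge d s Hsd). nra.
Qed.

Lemma v_le_6d : v <= 6 * INR d.
Proof.
  pose proof v_mul_w; pose proof w_bounds; pose proof lam_bounds; pose proof v_ge1; pose proof INR_d_ge1.
  destruct ln2_bounds.
  set (V := v) in *. nra.
Qed.

Lemma ln_64d_div_v_le : ln (64 * INR d / v) <= 7 + 2 * w.
Proof.
  pose proof d_ln2_eq as Hd2.
  pose proof u_bounds; pose proof w_bounds; pose proof v_ge1; pose proof INR_d_ge1; destruct ln2_bounds.
  set (V := v) in *. set (W := w) in *. set (U := u) in *.
  assert (HWU : W <= U) by (pose proof (ln_le_sub1 (1 + U) ltac:(lra)) as HW; change (ln (1 + U)) with W in HW; lra).
  assert (Hratio : 64 * INR d / V * ln 2 = 64 * (U * W)).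
  { replace (INR d) with (INR d * ln 2 / ln 2) by (field; lra).
    rewrite Hd2. field; lra. }
  assert (Hbound : 64 * INR d / V <= 128 * (1 + U) ^ 2).
  { assert (0 < 64 * INR d / V) by (apply Rdiv_lt_0_compat; lra).
    assert (U * W <= (1 + U) ^ 2) by nra. nra. }
  eapply Rle_trans; [apply ln_le; [apply Rdiv_lt_0_compat; lra | exact Hbound]|].
  replace 128 with (2 ^ 7) by lra.
  rewrite ln_mult, !ln_pow by (try apply pow_lt; lra). change (ln (1 + U)) with W. simpl INR. lra.
Qed.

Lemma exists_radius_count_lt : exists s, (ball_count d s < n)%nat /\ v <= 64 * (INR s + 2).
Proof.
  pose proof v_mul_w as Hvw; pose proof ln_64d_div_v_le; pose proof v_le_6d.
  pose proof w_bounds; pose proof v_ge1; pose proof INR_d_ge1.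
  set (V := v) in *. set (W := w) in *.
  destruct (nat_floor_exists (V / 64) ltac:(lra)) as [s [Hs1 Hs2]].
  exists s; split; [|lra].
  destruct s as [|s']; [rewrite ball_count_radius0; lia|].
  set (s := S s') in *. set (x := V / 64 / INR d).
  assert (Hx : 0 < x <= 1).
  { unfold x; split; [apply Rdiv_lt_0_compat; lra|].
    apply (Rmult_le_reg_r (INR d)); [lra|]. field_simplify; lra. }
  assert (Hlnx : - ln x <= 7 + 2 * W).
  { rewrite <- ln_Rinv by lra. replace (/ x) with (64 * INR d / V) by (unfold x; field; lra). lra. }
  assert (Hcount : ln (INR (ball_count d s)) < ln (INR n)).
  { pose proof (ln_ball_count_le d s x Hx).
    assert (INR d * x = V / 64) by (unfold x; field; lra).
    assert (0 <= - ln x) by (pose proof (ln_le x 1 ltac:(lra) ltac:(lra)); rewrite ln_1 in *; lra).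
    assert (INR s * - ln x <= V / 64 * - ln x) by (apply Rmult_le_compat_r; lra).
    rewrite <- Hvw. nra. }
  apply INR_lt, ln_lt_inv; [apply lt_0_INR; pose proof (ball_count_ge1 d s); lia | apply lt_0_INR; lia | exact Hcount].
Qed.

Lemma psi_eq_sqrt_inv : psi d n = sqrt (/ v).
Proof.
  unfold psi. rewrite (proj2 (Nat.leb_gt n d) Hdn). f_equal.
  destruct ln2_bounds, lam_bounds. unfold log2 at 1 3. rewrite Rinv_div. field; lra.
Qed.

Lemma approx_number_between_psi : 1 / 4 * psi d n <= approx_number d n <= 8 * psi d n.
Proof.
  rewrite psi_eq_sqrt_inv, !scale_sqrt by lra.
  pose proof v_ge1.
  destruct exists_radius_count_ge as [s [Hs Hsv]], exists_radius_count_lt as [s' [Hs' Hsv']].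
  pose proof (pos_INR s); pose proof (pos_INR s'). set (V := v) in *. split.
  - eapply Rle_trans; [|apply (approx_number_ge_radius d n s); [lia | exact Hs]].
    apply sqrt_le_1_alt. replace ((1 / 4) ^ 2 * / V) with (/ (16 * V)) by (field; lra).
    apply Rinv_le_contravar; lra.
  - eapply Rle_trans; [apply (approx_number_le_radius d n s'); [lia | exact Hs']|].
    apply sqrt_le_1_alt. replace (8 ^ 2 * / V) with (/ (V / 64)) by (field; lra).
    apply Rinv_le_contravar; lra.
Qed.

End Asymptotics.

Theorem theorem2p3 :
  exists c C : R, 0 < c /\ c <= C /\
    (forall d n : nat, (1 <= d)%nat -> (1 <= n)%nat -> (n <= 3 ^ d)%nat ->
       c * psi d n <= approx_number d n /\ approx_number d n <= C * psi d n) /\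
    (forall d n : nat, (1 <= d)%nat -> (3 ^ d < n)%nat -> approx_number d n = 0).
Proof.
  exists (1 / 4), 8. split; [lra | split; [lra | split]].
  - intros d n Hd Hn Hn3. destruct (Nat.le_gt_cases n d) as [Hnd | Hdn].
    + unfold psi; rewrite (proj2 (Nat.leb_le n d) Hnd), !Rmult_1_r. split.
      * eapply Rle_trans; [|apply (approx_number_ge_radius d n 1); [exact Hn | rewrite ball_count_radius1; lia]].
        rewrite <- (sqrt_Rsqr (1 / 4)) by lra. apply sqrt_le_1_alt. replace (INR 1 + 1) with 2 by (simpl; lra). unfold Rsqr; lra.
      * pose proof (approx_number_le1 d n Hn); lra.
    + now apply approx_number_between_psi.
  - intros d n _ Hn. now apply approx_number_beyond_dim.
Qed.
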